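(* Let $\Pi_n$ be a PARITY$_n$ program such that no rule $y\leftarrow B$ of $\Pi_n$ has $y\in var(B)$ and every rule body of $\Pi_n$ is consistent. Suppose $\Pi_n$ contains a rule $x\leftarrow B$ (with $x$ a variable) such that $not\ not\ x\in B$ and $S(B)=\{J\}$ for a single string $J$ which is odd. Let $\Pi_n'$ be obtained from $\Pi_n$ by replacing this rule with $x\leftarrow B\setminus\{not\ not\ x\}$. Then $Ans(\Pi_n')=$ PARITY$_n$.
   Context: A rule element is one of $\top$, $\bot$, $x$, $not\ x$, $not\ not\ x$, where $x$ is a variable. A (canonical) rule is $H\leftarrow B$ with $H$ a variable or $\bot$ and $B$ a finite set of rule elements; a canonical program is a finite set of rules. For a body $B$, $var(B)=\{e\in B: e\text{ is a variable}\}$. For a set of variables $I$: $I\models\top$; $I\not\models\bot$; $I\models x$ iff $I\models not\ not\ x$ iff $x\in I$; $I\models not\ x$ iff $x\notin I$; $I\models B$ iff $I$ satisfies every element of $B$; $I$ is closed under $H\leftarrow B$ if $I\models B$ implies $I\models H$. The reduct $\Pi^I$ replaces $not\ not\ x$ by $\top$ if $x\in I$ else $\bot$, and $not\ x$ by $\top$ if $x\notin I$ else $\bot$; $I$ is an answer set of $\Pi$ if $I$ is the least set closed under all rules of $\Pi^I$; $Ans(\Pi)$ is the set of answer sets; $var(\Pi)$ is the set of variables occurring in $\Pi$. Strings $w\in\{0,1\}^n$ are identified with $\{x_i:w_i=1\}$; PARITY$_n$ is the set of strings in $\{0,1\}^n$ with an odd number of 1's (odd strings; the others are even); a PARITY$_n$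 program is a canonical program $\Pi$ with $var(\Pi)=\{x_1,\dots,x_n\}$ and $Ans(\Pi)=$ PARITY$_n$. For a set $B$ of rule elements, $S(B)=\{I\subseteq\{x_1,\dots,x_n\}: I\models B\}$; $B$ is consistent if $S(B)\neq\emptyset$. *)

From HB Require Import structures.
From mathcomp Require Import all_boot.
Set Implicit Arguments. Unset Strict Implicit. Unset Printing Implicit Defensive.

(* Variables x_1..x_n are represented by 'I_n (x_{i+1} <-> i). *)
Inductive elem (n : nat) : Type :=
| ETop | EBot | EPos of 'I_n | ENeg of 'I_n | ENNeg of 'I_n.
Arguments ETop {n}. Arguments EBot {n}.

Definition elem_code n (e : elem n) : nat * option 'I_n :=
  match e with
  | ETop => (0, None) | EBot => (1, None) | EPos x => (2, Some x)
  | ENeg x => (3, Some x) | ENNeg x => (4, Some x) end.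
Definition elem_decode n (p : nat * option 'I_n) : option (elem n) :=
  match p with
  | (0, None) => Some ETop | (1, None) => Some EBot
  | (2, Some x) => Some (EPos x) | (3, Some x) => Some (ENeg x)
  | (4, Some x) => Some (ENNeg x) | _ => None end.
Lemma elem_codeK n : pcancel (@elem_code n) (@elem_decode n).
Proof. by case. Qed.
HB.instance Definition _ n := Equality.copy (elem n) (pcan_type (@elem_codeK n)).

(* A rule H <- B: head None stands for bottom; the body is a finite set of
   rule elements, represented by a list (set semantics). *)
Definition rule n := (option 'I_n * seq (elem n))%type.
Definition program n := seq (rule n).

Definition sat_elem n (I : {set 'I_n}) (e : elem n) : bool :=
  match e with
  | ETop => true | EBot => false
  | EPos x => x \in I | ENeg x => x \notin I | ENNeg x => x \in I end.
Definition sat_body n (I : {set 'I_n}) (B : seq (elem n)) : bool :=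
  all (sat_elem I) B.
Definition sat_head n (I : {set 'I_n}) (h : option 'I_n) : bool :=
  if h is Some x then x \in I else false.
Definition closed_rule n (I : {set 'I_n}) (r : rule n) : bool :=
  sat_body I r.2 ==> sat_head I r.1.
Definition closed_prog n (I : {set 'I_n}) (P : program n) : bool :=
  all (closed_rule I) P.

Definition reduct_elem n (I : {set 'I_n}) (e : elem n) : elem n :=
  match e with
  | ENNeg x => if x \in I then ETop else EBot
  | ENeg x => if x \notin I then ETop else EBot
  | _ => e end.
Definition reduct n (P : program n) (I : {set 'I_n}) : program n :=
  [seq (r.1, map (reduct_elem I) r.2) | r <- P].

Definition answer_set n (P : program n) (I : {set 'I_n}) : Prop :=
  closed_prog I (reduct P I) /\
  forall J : {set 'I_n}, closed_prog J (reduct P I) -> I \subset J.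

Definition ans_is_parity n (P : program n) : Prop :=
  forall I : {set 'I_n}, answer_set P I <-> odd #|I|.

Definition elem_vars n (e : elem n) : {set 'I_n} :=
  match e with
  | EPos x | ENeg x | ENNeg x => [set x] | _ => set0 end.
Definition rule_vars n (r : rule n) : {set 'I_n} :=
  (if r.1 is Some x then [set x] else set0) :|: \bigcup_(e <- r.2) elem_vars e.
Definition prog_vars n (P : program n) : {set 'I_n} :=
  \bigcup_(r <- P) rule_vars r.

Definition parity_program n (P : program n) : Prop :=
  prog_vars P = [set: 'I_n] /\ ans_is_parity P.

Definition consistent n (B : seq (elem n)) : Prop :=
  exists I : {set 'I_n}, sat_body I B.

Definition replace_rule n (P : program n) (r r' : rule n) : program n :=
  r' :: filter (predC1 r) P.

From HB Require Import structures.
From mathcomp Require Import all_boot.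

Set Implicit Arguments. Unset Strict Implicit. Unset Printing Implicit Defensive.

(* Write r for the rule x <- B and r' for x <- B \ {not not x}.  If x is in I,
   the reduct turns [not not x] into [top], so r and r' have equivalent
   reducts.  If x is not in I, the reduct of r has body [bot] and is
   vacuous; since reducts are positive programs, r' is then vacuous on every
   subset of I as well, unless I satisfies B \ {not not x}.  In that last case
   x |: I satisfies B, so x |: I = J; then I is even and is not closed under
   the reduct of r'. *)

Section Reduct.
Variable n : nat.
Implicit Types (I K L : {set 'I_n}) (e : elem n) (B : seq (elem n))
  (P : program n) (r : rule n).

Definition reduct_rule I r : rule n := (r.1, map (reduct_elem I) r.2).

Lemma sat_reduct_elem I e : sat_elem I (reduct_elem I e) = sat_elem I e.
Proof. by case: e => //= y; case: (y \in I). Qed.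

Lemma sat_reduct_body I B : sat_body I (map (reduct_elem I) B) = sat_body I B.
Proof. by rewrite /sat_body all_map; apply: eq_all => e; apply: sat_reduct_elem. Qed.

Lemma sat_reduct_elem_subset I K L e : K \subset L ->
  sat_elem K (reduct_elem I e) -> sat_elem L (reduct_elem I e).
Proof. by move=> /subsetP KL; case: e => //= y; case: ifP. Qed.

Lemma sat_reduct_body_subset I K L B : K \subset L ->
  sat_body K (map (reduct_elem I) B) -> sat_body L (map (reduct_elem I) B).
Proof.
move=> KL; rewrite /sat_body !all_map => /allP satK; apply/allP => e eB.
exact: sat_reduct_elem_subset KL (satK e eB).
Qed.

Lemma closed_reduct_setI P I K L :
  closed_prog K (reduct P I) -> closed_prog L (reduct P I) ->
  closed_prog (K :&: L) (reduct P I).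
Proof.
rewrite /closed_prog !all_map => /allP clK /allP clL; apply/allP => r rP /=.
apply/implyP => satKL.
have /implyP/(_ (sat_reduct_body_subset (subsetIl K L) satKL)) := clK r rP.
have /implyP/(_ (sat_reduct_body_subset (subsetIr K L) satKL)) := clL r rP.
by case: r.1 => //= y; rewrite inE => -> ->.
Qed.

Lemma closed_reduct_split P r I K : r \in P ->
  closed_prog K (reduct P I) =
  closed_rule K (reduct_rule I r) && closed_prog K (reduct (filter (predC1 r) P) I).
Proof.
move=> rP; rewrite /closed_prog !all_map all_filter.
apply/allP/andP => [cl | [clr /allP clQ] r0 r0P].
  by split; [exact: cl|apply/allP => r0 r0P; apply/implyP => _; exact: cl].
by case: (eqVneq r0 r) => [->|ne] //; have /implyP := clQ r0 r0P; apply.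
Qed.

End Reduct.

Section ReplaceRule.
Variable n : nat.
Implicit Types (I K : {set 'I_n}) (P : program n) (r : rule n).

Lemma answer_set_replace_equiv P r r' I : r \in P ->
  (forall K, closed_rule K (reduct_rule I r') = closed_rule K (reduct_rule I r)) ->
  answer_set (replace_rule P r r') I <-> answer_set P I.
Proof.
move=> rP eq_r.
have clE K : closed_prog K (reduct (replace_rule P r r') I) = closed_prog K (reduct P I).
  by rewrite (closed_reduct_split _ _ rP) -eq_r.
rewrite /answer_set clE; split=> -[clI least]; split=> // K.
  by rewrite -clE; apply: least.
by rewrite clE; apply: least.
Qed.

(* Leastness transfers through K :&: I, on which the reduct of r' is still
   vacuous because reducts are monotone. *)
Lemma answer_set_replace_vacuous P r r' I : r \in P ->
  (forall K, closed_rule K (reduct_rule I r)) ->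
  ~~ sat_body I (map (reduct_elem I) r'.2) ->
  answer_set (replace_rule P r r') I <-> answer_set P I.
Proof.
move=> rP vac_r unsat_r'.
pose Q K := closed_prog K (reduct (filter (predC1 r) P) I).
have clP K : closed_prog K (reduct P I) = Q K.
  by rewrite (closed_reduct_split _ _ rP) vac_r.
have clP' K : K \subset I -> closed_prog K (reduct (replace_rule P r r') I) = Q K.
  move=> KI; rewrite [LHS]/= /closed_rule /= [X in X ==> _](_ : _ = false) //.
  by apply/negbTE/negP => /(sat_reduct_body_subset KI); apply/negP.
have clI' := clP' I (subxx I).
split=> -[clI least]; split.
- by rewrite clP -clI'.
- move=> K clK; apply: subset_trans (subsetIl K I); apply: least.
  by rewrite clP' ?subsetIr // -clP; apply: closed_reduct_setI; rewrite // clP -clI'.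
- by rewrite clI' -clP.
- by move=> K /andP[_ clK]; apply: least; rewrite clP.
Qed.

Lemma not_answer_set_unclosed P r' I :
  sat_body I r'.2 -> ~~ sat_head I r'.1 -> ~ answer_set (r' :: P) I.
Proof.
move=> satI headI [/andP[/implyP clr' _] _].
by move: headI; rewrite clr' // sat_reduct_body.
Qed.

End ReplaceRule.

Section NotNot.
Variables (n : nat) (x : 'I_n).
Implicit Types (I K : {set 'I_n}) (B : seq (elem n)).

Lemma sat_reduct_body_drop_ENNeg I K B : x \in I ->
  sat_body K (map (reduct_elem I) [seq e <- B | e != ENNeg x]) =
  sat_body K (map (reduct_elem I) B).
Proof.
move=> xI; rewrite /sat_body !all_map all_filter; apply: eq_all => e /=.
by case: eqP => [->|_] //=; rewrite xI.
Qed.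

Lemma closed_reduct_ENNeg_notin I K h B : x \notin I -> ENNeg x \in B ->
  closed_rule K (reduct_rule I (h, B)).
Proof.
move=> xI xB.
have botB : EBot \in map (reduct_elem I) B.
  by apply/mapP; exists (ENNeg x); rewrite //= (negbTE xI).
by apply/implyP => /allP/(_ _ botB).
Qed.

Lemma ENeg_notin_sat_body J B : sat_body J B -> ENNeg x \in B -> ENeg x \notin B.
Proof. by move=> /allP satJ /satJ /= xJ; apply/negP => /satJ /=; rewrite xJ. Qed.

Lemma sat_body_setU1 I B : ENeg x \notin B ->
  sat_body I [seq e <- B | e != ENNeg x] -> sat_body (x |: I) B.
Proof.
rewrite /sat_body all_filter => nxB /allP satI; apply/allP => e eB.
case: (eqVneq e (ENNeg x)) => [->|ne]; first by rewrite /= setU11.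
move: (satI e eB) => /= /implyP/(_ ne).
case: e ne eB => //= y _ eB; rewrite in_setU1 ?negb_or => ->; rewrite ?orbT // andbT.
by apply: contraNneq nxB => <-.
Qed.

End NotNot.

Theorem mainTheorem11 (n : nat) (P : program n) (x : 'I_n) (B : seq (elem n))
  (J : {set 'I_n}) :
  parity_program P ->
  (forall r, r \in P -> forall y, r.1 = Some y -> EPos y \notin r.2) ->
  (forall r, r \in P -> consistent r.2) ->
  (Some x, B) \in P ->
  ENNeg x \in B ->
  (forall I : {set 'I_n}, sat_body I B <-> I = J) ->
  odd #|J| ->
  ans_is_parity (replace_rule P (Some x, B) (Some x, [seq e <- B | e != ENNeg x])).
Proof.
move=> [_ ansP] _ _ rP xB SB oddJ I; apply: iff_trans (ansP I).
set B' := [seq e <- B | e != ENNeg x].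
have satJ : sat_body J B by apply/SB.
have [xI | xI] := boolP (x \in I).
  apply: answer_set_replace_equiv => // K.
  by rewrite /closed_rule /= sat_reduct_body_drop_ENNeg.
have vac K := closed_reduct_ENNeg_notin K (Some x) xI xB.
have [satI | unsatI] := boolP (sat_body I B'); last first.
  by apply: (answer_set_replace_vacuous rP vac); rewrite sat_reduct_body.
have xIJ : x |: I = J.
  by apply/SB; apply: sat_body_setU1 satI; apply: ENeg_notin_sat_body satJ xB.
have evenI : ~~ odd #|I| by move: oddJ; rewrite -xIJ cardsU1 xI.
split=> [ansI | /ansP oddI]; last by rewrite oddI in evenI.
by case: (@not_answer_set_unclosed _ _ (Some x, B') I satI xI ansI).
Qed.
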